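(* Let $(X,S)$ be an association scheme, fix $x\in X$, and let $K$ be a field of positive characteristic $p$. Suppose that $p$ divides the valency $n_s$ for some $s\in S$. Then the Terwilliger algebra $KT(x)$ is not semisimple.
   Context: An association scheme $(X,S)$ consists of a finite set $X$ and a partition $S$ of $X\times X$ such that: (1) $1:=\{(x,x)\mid x\in X\}\in S$; (2) for $s\in S$, $s^*:=\{(y,x)\mid (x,y)\in s\}\in S$; (3) for $s,t,u\in S$ there is a nonnegative integer $p_{st}^u$ with $p_{st}^u=|xs\cap ty|$ whenever $(x,y)\in u$, where $xs=\{y\mid (x,y)\in s\}$ and $ty=\{z\mid (z,y)\in t\}$. The valency of $s\in S$ is $n_s:=p_{ss^*}^1=|xs|$ (independent of $x$). For $s\subseteq X\times X$ the adjacency matrix $\sigma_s$ has $(y,z)$-entry $1$ if $(y,z)\in s$ and $0$ otherwise. Fixing $x\in X$, for $s\in S$ let $E_s^*$ be the diagonal $0/1$ matrix whose $(y,y)$-entry is $1$ iff $y\in xs$. For a field $K$, $KT(x)$ is the $K$-subalgebra of $\mathrm{M}_X(K)$ generated by $\{E_s^*\sigma_tE_u^*\mid s,t,u\in S\}$ (matrices regarded over $K$). *)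

From mathcomp Require Import all_boot all_algebra.
Set Implicit Arguments. Unset Strict Implicit. Unset Printing Implicit Defensive.
Import GRing.Theory.
Local Open Scope ring_scope.

Section AS.
Variable X : finType.

Definition diag_rel : {set X * X} := [set u | u.1 == u.2].
Definition transp_rel (s : {set X * X}) : {set X * X} := [set u | (u.2, u.1) \in s].

Definition nbr (x : X) (s : {set X * X}) : {set X} := [set y | (x, y) \in s].

Definition is_assoc_scheme (S : {set {set X * X}}) : Prop :=
  [/\ partition S [set: X * X],
      diag_rel \in S,
      (forall s, s \in S -> transp_rel s \in S) &
      (forall s t u, s \in S -> t \in S -> u \in S ->
         exists c : nat, forall x y, (x, y) \in u ->
           #|[set z | ((x, z) \in s) && ((z, y) \in t)]| = c)].

(* valency n_s, computed at the base point x (independent of x) *)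
Definition valency (x : X) (s : {set X * X}) : nat := #|nbr x s|.

Variable K : fieldType.

Definition adjmx (s : {set X * X}) : 'M[K]_#|X| :=
  \matrix_(i, j) ((enum_val i, enum_val j) \in s)%:R.

Definition dualidem (x : X) (s : {set X * X}) : 'M[K]_#|X| :=
  \matrix_(i, j) ((i == j) && (enum_val i \in nbr x s))%:R.

Definition is_subalgebra (P : 'M[K]_#|X| -> Prop) : Prop :=
  [/\ P 0, P 1,
      (forall A B, P A -> P B -> P (A + B)),
      (forall (c : K) A, P A -> P (c *: A)) &
      (forall A B, P A -> P B -> P (A * B))].

(* the K-subalgebra generated by E*_s sigma_t E*_u, s,t,u in S *)
Definition terwilliger (S : {set {set X * X}}) (x : X) (M : 'M[K]_#|X|) : Prop :=
  forall P, is_subalgebra P ->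
    (forall s t u, s \in S -> t \in S -> u \in S ->
       P (dualidem x s * adjmx t * dualidem x u)) -> P M.

End AS.

Section SS.
Variables (K : fieldType) (n : nat).

Definition is_ideal (A I : 'M[K]_n -> Prop) : Prop :=
  (forall M, I M -> A M) /\ I 0 /\
      (forall M N, I M -> I N -> I (M + N)) /\
      (forall (c : K) M, I M -> I (c *: M)) /\
      (forall a M, A a -> I M -> I (a * M)) /\
      (forall a M, A a -> I M -> I (M * a)).

Definition nilpotent_set (I : 'M[K]_n -> Prop) : Prop :=
  exists k : nat, (0 < k)%N /\
    forall f : 'I_k -> 'M[K]_n, (forall i, I (f i)) -> \prod_(i < k) f i = 0.

(* A finite-dimensional algebra is semisimple iff its Jacobson radical
   (= the largest nilpotent two-sided ideal) is zero *)
Definition semisimple_alg (A : 'M[K]_n -> Prop) : Prop :=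
  forall I, is_ideal A I -> nilpotent_set I -> forall M, I M -> M = 0.
End SS.

From mathcomp Require Import all_boot all_algebra.
Set Implicit Arguments. Unset Strict Implicit. Unset Printing Implicit Defensive.
Import GRing.Theory.
Local Open Scope ring_scope.

(** Let W be the primary module of T(x): the vectors constant on every
    subconstituent x b.  W is T(x)-invariant and contains the characteristic
    vector of x.  The generator M = E*_1 sigma_s E*_s sends any v to
    (sum_{y in xs} v_y) e_x, so it maps everything into W; and on a vector of W
    that sum is n_s times a constant, which vanishes in characteristic p.
    Hence the matrices of T(x) mapping into W and killing W form a two-sided
    ideal of square zero, and it contains M <> 0. *)

Section SquareZeroIdeal.
Variables (X : finType) (K : fieldType).
Implicit Types (A : 'M[K]_#|X| -> Prop) (V : 'cV[K]_#|X| -> Prop).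

Definition is_subspace V : Prop :=
  [/\ V 0, forall v w, V v -> V w -> V (v + w) & forall c v, V v -> V (c *: v)].

Definition stabilizes A V : Prop := forall M v, A M -> V v -> V (M *m v).

Definition square_zero_ideal A V (M : 'M[K]_#|X|) : Prop :=
  [/\ A M, forall v, V (M *m v) & forall v, V v -> M *m v = 0].

Lemma stabilizer_subalgebra V :
  is_subspace V -> is_subalgebra (fun M => forall v, V v -> V (M *m v)).
Proof.
case=> V0 VD VZ; split=> [v _ | v Vv | M N HM HN v Vv | c M HM v Vv | M N HM HN v Vv].
- by rewrite mul0mx.
- by rewrite mul1mx.
- by rewrite mulmxDl; apply: VD; [apply: HM | apply: HN].
- by rewrite -scalemxAl; apply/VZ/HM.
- by rewrite -mulmxE -mulmxA; apply/HM/HN.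
Qed.

Section Ideal.
Variables (A : 'M[K]_#|X| -> Prop) (V : 'cV[K]_#|X| -> Prop).
Hypotheses (subalgA : is_subalgebra A) (subspV : is_subspace V) (stabV : stabilizes A V).

Lemma square_zero_ideal_is_ideal : is_ideal A (square_zero_ideal A V).
Proof.
have [A0 _ AD AZ AM] := subalgA; have [V0 VD VZ] := subspV.
split; first by move=> M [].
split; first by split=> // [v | v _]; rewrite mul0mx.
split.
  move=> M N [AM' imM kerM] [AN imN kerN]; split=> [|v|v Vv]; first exact: AD.
    by rewrite mulmxDl; apply: VD.
  by rewrite mulmxDl kerM ?kerN ?addr0.
split.
  move=> c M [AM' imM kerM]; split=> [|v|v Vv]; first exact: AZ.
    by rewrite -scalemxAl; apply: VZ.
  by rewrite -scalemxAl kerM ?scaler0.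
split.
  move=> a M Aa [AM' imM kerM]; split=> [|v|v Vv]; first exact: AM.
    by rewrite -mulmxE -mulmxA; apply: stabV.
  by rewrite -mulmxE -mulmxA kerM ?mulmx0.
move=> a M Aa [AM' imM kerM]; split=> [|v|v Vv]; first exact: AM.
  by rewrite -mulmxE -mulmxA.
by rewrite -mulmxE -mulmxA kerM //; apply: stabV.
Qed.

Lemma square_zero_ideal_nilpotent : nilpotent_set (square_zero_ideal A V).
Proof.
exists 2%N; split=> // f If; rewrite !big_ord_recl big_ord0 mulr1.
have [_ _ kerf0] := If ord0; have [_ imf1 _] := If (lift ord0 ord0).
apply/row_matrixP => i; rewrite row0; apply/rowP => j.
have := congr1 (fun v : 'cV_#|X| => v i 0) (kerf0 _ (imf1 (delta_mx j 0))).
by rewrite mulmxA -colE mulmxE !mxE.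
Qed.

Lemma not_semisimple_square_zero M :
  square_zero_ideal A V M -> M != 0 -> ~ semisimple_alg A.
Proof.
move=> IM /eqP M_neq0 ssA; apply: M_neq0.
exact: (ssA _ square_zero_ideal_is_ideal square_zero_ideal_nilpotent M IM).
Qed.

End Ideal.
End SquareZeroIdeal.

Section Entries.
Variables (X : finType) (K : fieldType).
Implicit Types (x : X) (a b s t : {set X * X}) (i j : 'I_#|X|).

Lemma card_enum_val_preim (P : {pred X}) :
  #|[pred i : 'I_#|X| | enum_val i \in P]| = #|P|.
Proof.
rewrite -(on_card_preimset (onW_bij P (@enum_val_bij X))).
by apply: eq_card => i; rewrite !inE.
Qed.

Lemma sum_enum_val_const (P : {pred X}) (w : 'cV[K]_#|X|) c :
  (forall i : 'I_#|X|, enum_val i \in P -> w i 0 = c) ->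
  \sum_(i < #|X|) (enum_val i \in P)%:R * w i 0 = #|P|%:R * c.
Proof.
move=> wc; transitivity (\sum_(i in [pred i : 'I_#|X| | enum_val i \in P]) c).
  rewrite [RHS]big_mkcond; apply: eq_bigr => i _; rewrite inE mulr_natl.
  by case: ifP => [/wc-> | _]; rewrite ?mulr1n ?mulr0n.
by rewrite big_const card_enum_val_preim iter_addr_0 mulr_natl.
Qed.

Lemma dualidem_mull x s (M : 'M[K]_#|X|) i j :
  (dualidem K x s * M) i j = (enum_val i \in nbr x s)%:R * M i j.
Proof.
rewrite -mulmxE mxE (bigD1 i) //= big1 ?addr0; first by rewrite mxE eqxx.
by move=> k /negbTE ki; rewrite mxE eq_sym ki mul0r.
Qed.

Lemma dualidem_mulr x s (M : 'M[K]_#|X|) i j :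
  (M * dualidem K x s) i j = M i j * (enum_val j \in nbr x s)%:R.
Proof.
rewrite -mulmxE mxE (bigD1 j) //= big1 ?addr0; first by rewrite mxE eqxx.
by move=> k /negbTE kj; rewrite mxE kj mulr0.
Qed.

Lemma dualidem_adjmx_mxE x a t b i j :
  (dualidem K x a * adjmx K t * dualidem K x b) i j =
  [&& enum_val i \in nbr x a, (enum_val i, enum_val j) \in t
    & enum_val j \in nbr x b]%:R.
Proof. by rewrite dualidem_mulr dualidem_mull mxE -!natrM !mulnb andbA. Qed.

Lemma mulmx_dualidem_adjmx x a t b (w : 'cV[K]_#|X|) i :
  ((dualidem K x a * adjmx K t * dualidem K x b) *m w) i 0 =
  (enum_val i \in nbr x a)%:R *
  \sum_(j < #|X|) (enum_val j \in [pred z | ((enum_val i, z) \in t) && ((x, z) \in b)])%:R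
    * w j 0.
Proof.
rewrite mxE mulr_sumr; apply: eq_bigr => j _.
by rewrite dualidem_adjmx_mxE mulrA -natrM mulnb !inE.
Qed.

Lemma mulmx_dualidem_diag_adjmx x s (v : 'cV[K]_#|X|) :
  (dualidem K x (diag_rel X) * adjmx K s * dualidem K x s) *m v =
  (\sum_(j < #|X|) (enum_val j \in nbr x s)%:R * v j 0) *: delta_mx (enum_rank x) 0.
Proof.
apply/matrixP => i k; rewrite ord1 mulmx_dualidem_adjmx !mxE eqxx andbT.
have [-> | ne_ix] := eqVneq i (enum_rank x).
  rewrite enum_rankK !inE eqxx mul1r mulr1.
  by apply: eq_bigr => j _; rewrite !inE andbb.
have -> : (enum_val i \in nbr x (diag_rel X)) = false.
  by rewrite !inE /=; apply: contraNF ne_ix => /eqP ->; rewrite enum_valK.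
by rewrite mul0r mulr0.
Qed.

End Entries.

Section Scheme.
Variables (X : finType) (S : {set {set X * X}}).
Hypothesis scheme : is_assoc_scheme S.
Implicit Types (x : X) (a b c s t : {set X * X}).

Lemma nbr_block x a c y :
  a \in S -> c \in S -> y \in nbr x c -> (y \in nbr x a) = (a == c).
Proof.
have [/and3P [_ tI _] _ _ _] := scheme.
rewrite !inE => aS cS yc; apply/idP/eqP => [ya | -> //].
by rewrite -(def_pblock tI aS ya) (def_pblock tI cS yc).
Qed.

Lemma intersection_number a t b :
  a \in S -> t \in S -> b \in S ->
  exists k, forall x y, (x, y) \in a ->
    #|[pred z | ((y, z) \in t) && ((x, z) \in b)]| = k.
Proof.
have [_ _ transpS constS] := scheme.
move=> aS tS bS; have [k Hk] := constS _ _ _ tS (transpS _ bS) (transpS _ aS).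
exists k => x y xy; rewrite -(Hk y x); last by rewrite inE.
by apply: eq_card => z; rewrite !inE.
Qed.

Lemma valency_gt0 x s : s \in S -> (0 < valency x s)%N.
Proof.
have [/and3P [_ _ nS0] diagS _ _] := scheme.
move=> sS; have [k Hk] := intersection_number diagS sS sS.
have /set0Pn [[x1 y1] s_x1y1] : s != set0 by apply: contraNneq nS0 => <-.
have -> : valency x s = k.
  by rewrite -(Hk x x) ?inE //; apply: eq_card => z; rewrite !inE andbb.
rewrite -(Hk x1 x1) ?inE //; apply/card_gt0P; exists y1; by rewrite inE s_x1y1.
Qed.

End Scheme.

Section PrimaryModule.
Variables (X : finType) (K : fieldType) (S : {set {set X * X}}) (x : X).
Hypothesis scheme : is_assoc_scheme S.
Implicit Types (a b s t : {set X * X}) (w : 'cV[K]_#|X|).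

Definition primary_vec w : Prop :=
  forall b, b \in S -> exists c, forall i, enum_val i \in nbr x b -> w i 0 = c.

Lemma primary_subspace : is_subspace primary_vec.
Proof.
split=> [b _ | v w pv pw b bS | c v pv b bS].
- by exists 0 => i _; rewrite mxE.
- have [[cv Hv] [cw Hw]] := (pv b bS, pw b bS).
  by exists (cv + cw) => i ib; rewrite mxE Hv ?Hw.
- have [cv Hv] := pv b bS.
  by exists (c * cv) => i ib; rewrite mxE Hv.
Qed.

Lemma delta_primary : primary_vec (delta_mx (enum_rank x) 0).
Proof.
have [_ diagS _ _] := scheme.
move=> b bS; exists (diag_rel X == b)%:R => i ib.
rewrite mxE eqxx andbT -(nbr_block scheme diagS bS ib) !inE /=.
by rewrite -(inj_eq enum_val_inj) enum_rankK eq_sym.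
Qed.

Lemma gen_stabilizes_primary a t b w :
  a \in S -> t \in S -> b \in S -> primary_vec w ->
  primary_vec ((dualidem K x a * adjmx K t * dualidem K x b) *m w).
Proof.
move=> aS tS bS pw c cS; have [cb Hb] := pw b bS.
have [k Hk] := intersection_number scheme aS tS bS.
exists ((a == c)%:R * (k%:R * cb)) => i ic.
rewrite mulmx_dualidem_adjmx (nbr_block scheme aS cS ic).
have [ac | _] := eqVneq a c; last by rewrite !mul0r.
move: ic; rewrite -ac inE => /Hk k_i.
rewrite (sum_enum_val_const (c := cb)) ?k_i ?mul1r // => j.
by rewrite !inE => /andP [_ xj]; apply: Hb; rewrite inE.
Qed.

Lemma terwilliger_subalgebra : is_subalgebra (@terwilliger X K S x).
Proof.
split=> [P [] // | P [] // | M N TM TN P subP gP | c M TM P subP gP | M N TM TN P subP gP].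
- by have [_ _ PD _ _] := subP; apply: PD; [apply: TM | apply: TN].
- by have [_ _ _ PZ _] := subP; apply: PZ; apply: TM.
- by have [_ _ _ _ PM] := subP; apply: PM; [apply: TM | apply: TN].
Qed.

Lemma terwilliger_stabilizes_primary :
  stabilizes (@terwilliger X K S x) primary_vec.
Proof.
move=> M v TM; apply: (TM _ (stabilizer_subalgebra primary_subspace)) => a t b aS tS bS w.
exact: gen_stabilizes_primary.
Qed.

Lemma primary_sum_nbr_eq0 p s w :
  p \in [pchar K] -> s \in S -> (p %| valency x s)%N -> primary_vec w ->
  \sum_(j < #|X|) (enum_val j \in nbr x s)%:R * w j 0 = 0.
Proof.
move=> pK sS p_dvd pw; have [c Hc] := pw s sS.
move: p_dvd; rewrite (dvdn_pcharf pK) => /eqP ns0.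
by rewrite (sum_enum_val_const Hc) -/(valency x s) ns0 mul0r.
Qed.

End PrimaryModule.

Theorem theorem3p4 (X : finType) (S : {set {set X * X}}) (x : X)
    (K : fieldType) (p : nat) :
  is_assoc_scheme S ->
  p \in [pchar K]%R ->
  (exists2 s, s \in S & (p %| valency x s)%N) ->
  ~ semisimple_alg (@terwilliger X K S x).
Proof.
move=> scheme pK [s sS p_dvd].
have [_ diagS _ _] := scheme.
pose M := dualidem K x (diag_rel X) * adjmx K s * dualidem K x s.
have [_ _ VZ] := primary_subspace K S x.
apply: (not_semisimple_square_zero (terwilliger_subalgebra K S x)
          (primary_subspace K S x) (terwilliger_stabilizes_primary scheme) (M := M)).
- split=> [P _ gen_P | v | w pw]; first exact: (gen_P _ _ _ diagS sS sS).
  + by rewrite /M mulmx_dualidem_diag_adjmx; apply/VZ/delta_primary.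
  + by rewrite /M mulmx_dualidem_diag_adjmx (primary_sum_nbr_eq0 pK sS p_dvd pw) scale0r.
- have /card_gt0P [y] := valency_gt0 scheme x sS; rewrite inE => xy.
  apply/eqP => /matrixP /(_ (enum_rank x) (enum_rank y)).
  rewrite /M dualidem_adjmx_mxE mxE !enum_rankK !inE /= eqxx xy.
  by move/eqP; rewrite oner_eq0.
Qed.
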